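(* Let $\{(a_i,b_i,m_i,n_i):i\in\mathbb{Z}\}$ be a positive ABMN solution and $\phi_i=\frac{n_{i-1}-n_i}{m_i-m_{i-1}}$. Then for every $i\in\mathbb{Z}$: $\frac{m_i-m_{i-1}}{m_{i+1}-m_{i-1}}=\frac{1}{c(\phi_i)}$, $\quad\frac{n_{i-1}-n_i}{n_{i-1}-n_{i+1}}=\frac{1}{d(\phi_i)}$, $\quad s(\phi_i)=\phi_{i+1}$.
   Context: ABMN system on $\mathbb{Z}$: real variables $a_i,b_i\ge0$, $m_i,n_i$ with, for all $i$, $(a_i+b_i)(m_i+a_i)=a_im_{i+1}+b_im_{i-1}$, $(a_i+b_i)(n_i+b_i)=a_in_{i+1}+b_in_{i-1}$, $(a_i+b_i)^2=b_i(m_{i+1}-m_{i-1})$, $(a_i+b_i)^2=a_i(n_{i-1}-n_{i+1})$; positive if all $a_i,b_i>0$ (then $m$ is strictly increasing and $n$ strictly decreasing). For $x>0$ let $\omega=\sqrt{8x+1}$, $c(x)=\frac{(\omega+3)^2}{16}$, $d(x)=\frac{(\omega+3)^2}{8(\omega+1)}$, $s(x)=\frac{(\omega-1)^2}{4(\omega+7)}$. *)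

From Stdlib Require Import Reals ZArith.
Open Scope R_scope.

Definition ABMN (a b m n : Z -> R) : Prop :=
  forall i : Z,
    0 <= a i /\ 0 <= b i /\
    (a i + b i) * (m i + a i) = a i * m (i + 1)%Z + b i * m (i - 1)%Z /\
    (a i + b i) * (n i + b i) = a i * n (i + 1)%Z + b i * n (i - 1)%Z /\
    (a i + b i) ^ 2 = b i * (m (i + 1)%Z - m (i - 1)%Z) /\
    (a i + b i) ^ 2 = a i * (n (i - 1)%Z - n (i + 1)%Z).

Definition positive_ABMN (a b m n : Z -> R) : Prop :=
  ABMN a b m n /\ forall i : Z, 0 < a i /\ 0 < b i.

Definition omega (x : R) : R := sqrt (8 * x + 1).
Definition cfun (x : R) : R := (omega x + 3) ^ 2 / 16.
Definition dfun (x : R) : R := (omega x + 3) ^ 2 / (8 * (omega x + 1)).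
Definition sfun (x : R) : R := (omega x - 1) ^ 2 / (4 * (omega x + 7)).

Definition phi (m n : Z -> R) (i : Z) : R :=
  (n (i - 1)%Z - n i) / (m i - m (i - 1)%Z).

(** With [t = b_i / a_i], the four ABMN relations at [i] force
    [m_i - m_{i-1} = a_i^2 / b_i], [m_{i+1} - m_i = 2 a_i + b_i],
    [n_{i-1} - n_i = 2 b_i + a_i] and [n_i - n_{i+1} = b_i^2 / a_i].
    Hence [phi_i = t (2t + 1)], so [8 phi_i + 1 = (4t + 1)^2] and the square
    root in [omega] disappears: [c(phi_i) = (t+1)^2], [d(phi_i) = (t+1)^2/(2t+1)]
    and [s(phi_i) = t^2/(t+2) = phi_{i+1}]. *)

From Stdlib Require Import Reals ZArith Lra Psatz.
Open Scope R_scope.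

(* [u], [v] are the backward and forward increments of [m] at [i]; the
   [n]-relations have the same shape with [a] and [b] exchanged. *)
Lemma ABMN_row_increments (a b u v : R) :
  a + b <> 0 ->
  b * u + a ^ 2 + a * b = a * v ->
  (a + b) ^ 2 = b * (u + v) ->
  v = 2 * a + b /\ b * u = a ^ 2.
Proof.
  intros Hab Hrow Hsq.
  assert (Hv : v = 2 * a + b).
  { apply (Rmult_eq_reg_l (a + b)); [nra | exact Hab]. }
  split; [exact Hv | subst v; nra].
Qed.

Lemma ABMN_m_increments (a b m n : Z -> R) (i : Z) :
  ABMN a b m n -> a i + b i <> 0 ->
  m (i + 1)%Z - m i = 2 * a i + b i /\ b i * (m i - m (i - 1)%Z) = a i ^ 2.
Proof.
  intros H Hab; destruct (H i) as (_ & _ & Hm & _ & Hmsq & _).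
  apply ABMN_row_increments; [exact Hab | nra | rewrite Hmsq; ring].
Qed.

Lemma ABMN_n_increments (a b m n : Z -> R) (i : Z) :
  ABMN a b m n -> a i + b i <> 0 ->
  n (i - 1)%Z - n i = 2 * b i + a i /\ a i * (n i - n (i + 1)%Z) = b i ^ 2.
Proof.
  intros H Hab; destruct (H i) as (_ & _ & _ & Hn & _ & Hnsq).
  apply (ABMN_row_increments (b i) (a i)); [lra | nra | rewrite Rplus_comm, Hnsq; ring].
Qed.

Lemma omega_param (t : R) : 0 <= 4 * t + 1 -> omega (t * (2 * t + 1)) = 4 * t + 1.
Proof.
  intro Ht; unfold omega.
  replace (8 * (t * (2 * t + 1)) + 1) with ((4 * t + 1) ^ 2) by ring.
  now apply sqrt_pow2.
Qed.

Lemma cfun_param (t : R) : 0 <= t -> cfun (t * (2 * t + 1)) = (t + 1) ^ 2.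
Proof. intro Ht; unfold cfun; rewrite omega_param by lra; field. Qed.

Lemma dfun_param (t : R) :
  0 <= t -> dfun (t * (2 * t + 1)) = (t + 1) ^ 2 / (2 * t + 1).
Proof. intro Ht; unfold dfun; rewrite omega_param by lra; field; lra. Qed.

Lemma sfun_param (t : R) : 0 <= t -> sfun (t * (2 * t + 1)) = t ^ 2 / (t + 2).
Proof. intro Ht; unfold sfun; rewrite omega_param by lra; field; lra. Qed.

Theorem mainTheorem11 (a b m n : Z -> R) :
  positive_ABMN a b m n ->
  forall i : Z,
    (m i - m (i - 1)%Z) / (m (i + 1)%Z - m (i - 1)%Z) = 1 / cfun (phi m n i) /\
    (n (i - 1)%Z - n i) / (n (i - 1)%Z - n (i + 1)%Z) = 1 / dfun (phi m n i) /\
    sfun (phi m n i) = phi m n (i + 1)%Z.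
Proof.
  intros [H Hpos] i; destruct (Hpos i) as [Ha Hb].
  destruct (ABMN_m_increments a b m n i H) as [Hm2 Hm1]; [lra |].
  destruct (ABMN_n_increments a b m n i H) as [Hn1 Hn2]; [lra |].
  assert (Hdm : m i - m (i - 1)%Z = a i ^ 2 / b i) by (field_simplify_eq; lra).
  assert (Hdn : n i - n (i + 1)%Z = b i ^ 2 / a i) by (field_simplify_eq; lra).
  set (t := b i / a i).
  assert (Ht : 0 <= t) by (apply Rlt_le, Rdiv_lt_0_compat; lra).
  assert (Hphi : phi m n i = t * (2 * t + 1))
    by (unfold phi, t; rewrite Hn1, Hdm; field; lra).
  unfold phi in Hphi |- *; replace (i + 1 - 1)%Z with i by lia.
  rewrite Hphi, cfun_param, dfun_param, sfun_param by exact Ht.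
  replace (m (i + 1)%Z - m (i - 1)%Z) with ((m (i + 1)%Z - m i) + (m i - m (i - 1)%Z)) by ring.
  replace (n (i - 1)%Z - n (i + 1)%Z) with ((n (i - 1)%Z - n i) + (n i - n (i + 1)%Z)) by ring.
  rewrite Hm2, Hn1, Hdm, Hdn; unfold t.
  repeat split; field; repeat split; nra.
Qed.
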